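(* Let $C$ be a convex subset of a real topological vector space $X$. Call two faces $F,G$ of $C$ closure-equivalent if $\overline F=\overline G$, and for each closure-equivalence class $\mathcal K$ of faces of $C$ let $U_{\mathcal K}=\bigcup_{F\in\mathcal K}\operatorname{fri} F$. Then $C=\bigcup_{\mathcal K}U_{\mathcal K}$, the union being over all closure-equivalence classes, and $U_{\mathcal K}\cap U_{\mathcal K'}=\emptyset$ whenever $\mathcal K\neq\mathcal K'$.
   Context: For a convex set $C$, a convex subset $F\subseteq C$ is a face of $C$ if for every $x\in F$ and all $y,z\in C$ with $x\in(y,z)=\{(1-t)y+tz:t\in(0,1)\}$ we have $y,z\in F$; $F_{\min}(x,C)$ is the intersection of all faces of $C$ containing $x\in C$. The face relative interior of a convex set $D$ is $\operatorname{fri} D=\{x\in D: D\subseteq\overline{F_{\min}(x,D)}\}$. *)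

From HB Require Import structures.
From mathcomp Require Import all_boot all_order all_algebra.
From mathcomp Require Import all_classical all_reals all_analysis.
Set Implicit Arguments. Unset Strict Implicit. Unset Printing Implicit Defensive.
Import Order.TTheory GRing.Theory Num.Theory.
Local Open Scope classical_set_scope.
Local Open Scope ring_scope.

Section Faces.
Context {R : realType} {X : lmodType R}.

Definition oseg (y z : X) : set X :=
  [set x | exists t : R, 0 < t < 1 /\ x = (1 - t) *: y + t *: z].

Definition is_face (C F : set X) : Prop :=
  [/\ convex.convex_set (F : set (convex_lmodType X)), F `<=` C &
      forall x y z, F x -> C y -> C z -> oseg y z x -> F y /\ F z].

Definition Fmin (x : X) (C : set X) : set X :=
  \bigcap_(F in [set F | is_face C F /\ F x]) F.

End Faces.

Definition fri {R : realType} {X : topologicalLmodType R} (D : set X) : set X :=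
  [set x | D x /\ D `<=` closure (Fmin x D)].

Definition cl_class {R : realType} {X : topologicalLmodType R} (C F : set X)
  : set (set X) :=
  [set G | is_face C G /\ closure G = closure F].

Definition cl_classes {R : realType} {X : topologicalLmodType R} (C : set X)
  : set (set (set X)) :=
  [set K | exists F, is_face C F /\ K = cl_class C F].

Definition U_class {R : realType} {X : topologicalLmodType R} (K : set (set X))
  : set X :=
  \bigcup_(F in K) fri F.

From HB Require Import structures.
From mathcomp Require Import all_boot all_order all_algebra.
From mathcomp Require Import all_classical all_reals all_analysis.
Set Implicit Arguments. Unset Strict Implicit. Unset Printing Implicit Defensive.
Local Open Scope classical_set_scope.

(* Every face of a face of C is a face of C, and the minimal face F_min(x, C)
   is a face of any face F of C containing x; hence F_min(x, F) = F_min(x, C).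
   So x lies in fri F exactly when F is contained in the closure of
   F_min(x, C), and then cl F = cl F_min(x, C). Thus the closure-equivalence
   class of F_min(x, C) is the only class whose set U contains x, and x does
   lie in it because x is in fri F_min(x, C). *)

Local Notation convex A := (convex.convex_set (A : set (convex_lmodType _))).

Section Faces.
Context {R : realType} {X : lmodType R}.
Implicit Types (C F G : set X) (x : X).

Lemma face_refl C : convex C -> is_face C C.
Proof. by move=> cC; split. Qed.

Lemma face_trans C F G : is_face C F -> is_face F G -> is_face C G.
Proof.
move=> [_ FC faceF] [cG GF faceG]; split=> [//|x /GF /FC //|x y z Gx Cy Cz yzx].
have [Fy Fz] := faceF x y z (GF _ Gx) Cy Cz yzx.
exact: faceG Gx Fy Fz yzx.
Qed.

Lemma face_restrict C F G : is_face C G -> G `<=` F -> F `<=` C -> is_face F G.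
Proof.
move=> [cG _ faceG] GF FC; split=> // x y z Gx Fy Fz.
exact: faceG (FC _ Fy) (FC _ Fz).
Qed.

Lemma Fmin_mem x C : Fmin x C x.
Proof. by move=> F []. Qed.

Lemma Fmin_min x C F : is_face C F -> F x -> Fmin x C `<=` F.
Proof. by move=> faceF Fx y; apply. Qed.

Lemma Fmin_face x C : convex C -> C x -> is_face C (Fmin x C).
Proof.
move=> cC Cx; split.
- move=> a b l; rewrite !in_setE => Fa Fb F [faceF Fx].
  have [cF _ _] := faceF; rewrite -in_setE.
  by apply: cF; rewrite in_setE; [exact: Fa | exact: Fb].
- exact: Fmin_min (face_refl cC) Cx.
- move=> a y z Fa Cy Cz yza; split=> F [faceF Fx];
    have [_ _ faceF_ext] := faceF;
    by have [] := faceF_ext a y z (Fa F (conj faceF Fx)) Cy Cz yza.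
Qed.

Lemma Fmin_of_face x C F : convex C -> is_face C F -> F x ->
  Fmin x F = Fmin x C.
Proof.
move=> cC faceF Fx; have [_ FC _] := faceF.
have faceFmin := Fmin_face cC (FC _ Fx).
apply/seteqP; split.
  exact: Fmin_min (face_restrict faceFmin (Fmin_min faceF Fx) FC) (@Fmin_mem x C).
by move=> y Fy G [faceG Gx]; apply: Fy; split=> //; exact: face_trans faceG.
Qed.

End Faces.

Section FaceRelativeInterior.
Context {R : realType} {X : topologicalLmodType R}.
Implicit Types (C F : set X) (x : X).

Lemma fri_Fmin x C : convex C -> C x -> fri (Fmin x C) x.
Proof.
move=> cC Cx; split; first exact: Fmin_mem.
by rewrite (Fmin_of_face cC (Fmin_face cC Cx) (@Fmin_mem _ _ x C)); exact: subset_closure.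
Qed.

Lemma closure_fri x C F : convex C -> is_face C F -> fri F x ->
  closure F = closure (Fmin x C).
Proof.
move=> cC faceF [Fx]; rewrite (Fmin_of_face cC faceF Fx) => F_sub.
apply/seteqP; split; last exact: closureS (Fmin_min faceF Fx).
by rewrite closureE; exact: smallest_sub (@closed_closure _ _) F_sub.
Qed.

Lemma U_class_closure x C F : convex C -> U_class (cl_class C F) x ->
  closure F = closure (Fmin x C).
Proof. by move=> cC [G [faceG <-]]; exact: closure_fri. Qed.

End FaceRelativeInterior.

Theorem theorem5p3 (R : realType) (X : topologicalLmodType R) (C : set X) :
  convex.convex_set (C : set (convex_lmodType X)) ->
  C = \bigcup_(K in cl_classes C) U_class K /\
  (forall K K', cl_classes C K -> cl_classes C K' -> K <> K' ->
     U_class K `&` U_class K' = set0).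
Proof.
move=> cC; split.
  apply/seteqP; split=> [x Cx | x [_ [F [_ ->]] [G [[_ GC _] _] [Gx _]]]].
  - have faceFmin := Fmin_face cC Cx.
    by exists (cl_class C (Fmin x C)); [exists (Fmin x C) | exists (Fmin x C)];
      last exact: fri_Fmin.
  - exact: GC.
move=> K K' [F [_ ->]] [F' [_ ->]] classes_neq.
apply/seteqP; split=> // x [UFx UF'x]; apply: classes_neq.
by rewrite /cl_class (U_class_closure cC UFx) (U_class_closure cC UF'x).
Qed.
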